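(* Let $E:\mathbb{R}^{N_x}\to\mathbb{R}$ be twice differentiable, and consider the optimal control problem (R): minimize $y(t_f)$ over state trajectories $(y(\cdot),\boldsymbol x(\cdot),\boldsymbol v(\cdot))$ with $y(t)\in\mathbb{R}$, $\boldsymbol x(t),\boldsymbol v(t)\in\mathbb{R}^{N_x}$, unconstrained controls $\boldsymbol u(t)\in\mathbb{R}^{N_x}$ and free final time $t_f$, subject to $\dot{\boldsymbol x}=\boldsymbol v$, $\dot{\boldsymbol v}=\boldsymbol u$, $\dot y=\nabla E(\boldsymbol x)\cdot\boldsymbol v$, $(\boldsymbol x(t_0),t_0)=(\boldsymbol x^0,t^0)$, $y(t_0)=E(\boldsymbol x^0)$, $\boldsymbol v(t_f)=\mathbf 0$, where $\boldsymbol x^0\in\mathbb{R}^{N_x}$ and $t^0$ are given, and $t_f$, $\boldsymbol x(t_f)$, $\boldsymbol v(t_0)$ are free. Then Problem (R) has no abnormal extremals; that is, for every extremal the cost multiplier $\nu_0$ is strictly positive.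
   Context: The Pontryagin Hamiltonian of (R) is $H(\boldsymbol\lambda_x,\boldsymbol\lambda_v,\lambda_y,\boldsymbol x,\boldsymbol v,y,\boldsymbol u)=\boldsymbol\lambda_x\cdot\boldsymbol v+\boldsymbol\lambda_v\cdot\boldsymbol u+\lambda_y\,\nabla E(\boldsymbol x)\cdot\boldsymbol v$. An extremal is a state–control trajectory together with costates $(\boldsymbol\lambda_x,\boldsymbol\lambda_v,\lambda_y)$ and a cost multiplier $\nu_0\ge 0$, not all multipliers vanishing (nontriviality), satisfying the adjoint equations $\dot{\boldsymbol\lambda}_x=-\lambda_y\nabla^2E(\boldsymbol x)\boldsymbol v$, $\dot{\boldsymbol\lambda}_v=-\boldsymbol\lambda_x-\lambda_y\nabla E(\boldsymbol x)$, $\dot\lambda_y=0$; the transversality conditions $\boldsymbol\lambda_x(t_f)=\mathbf 0$, $\boldsymbol\lambda_v(t_0)=\mathbf 0$, $\lambda_y(t_f)=\nu_0$; and the Hamiltonian minimization condition ($\boldsymbol u(t)$ minimizes $H$ over $\mathbb{R}^{N_x}$). An extremal is abnormal if $\nu_0=0$. *)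

From HB Require Import structures.
From mathcomp Require Import all_boot all_order all_algebra.
From mathcomp Require Import all_classical all_reals all_analysis.
Set Implicit Arguments. Unset Strict Implicit. Unset Printing Implicit Defensive.
Import Order.TTheory GRing.Theory Num.Theory.
Import numFieldNormedType.Exports.
Local Open Scope classical_set_scope.
Local Open Scope ring_scope.

Definition dotv (R : realType) (n : nat) (a b : 'rV[R]_n) : R :=
  \sum_(i < n) a 0 i * b 0 i.

Definition grad (R : realType) (n : nat) (E : 'rV[R]_n -> R) (x : 'rV[R]_n)
  : 'rV[R]_n := \row_i 'D_(delta_mx 0 i) E x.

Definition hessv (R : realType) (n : nat) (E : 'rV[R]_n -> R)
  (x w : 'rV[R]_n) : 'rV[R]_n := 'D_w (grad E) x.

Definition twice_differentiable (R : realType) (n : nat) (E : 'rV[R]_n -> R) :=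
  forall x, differentiable E x /\ differentiable (grad E) x.

Definition hamiltonian (R : realType) (n : nat) (E : 'rV[R]_n -> R)
  (lx lv : 'rV[R]_n) (ly : R) (x v : 'rV[R]_n) (y : R) (u : 'rV[R]_n) : R :=
  dotv lx v + dotv lv u + ly * dotv (grad E x) v.

Definition admissible (R : realType) (n : nat) (E : 'rV[R]_n -> R)
  (x0 : 'rV[R]_n) (t0 tf : R)
  (x v : R -> 'rV[R]_n) (y : R -> R) (u : R -> 'rV[R]_n) : Prop :=
  [/\ t0 < tf,
      [/\ {within `[t0, tf], continuous x}, {within `[t0, tf], continuous v}
        & {within `[t0, tf], continuous y}],
      (forall t, t0 < t < tf ->
        [/\ is_derive t 1 x (v t), is_derive t 1 v (u t)
          & is_derive t 1 y (dotv (grad E (x t)) (v t))])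
    & [/\ x t0 = x0, y t0 = E x0 & v tf = 0]].

Definition extremal (R : realType) (n : nat) (E : 'rV[R]_n -> R)
  (x0 : 'rV[R]_n) (t0 tf : R)
  (x v : R -> 'rV[R]_n) (y : R -> R) (u : R -> 'rV[R]_n)
  (lx lv : R -> 'rV[R]_n) (ly : R -> R) (nu0 : R) : Prop :=
  admissible E x0 t0 tf x v y u /\ 0 <= nu0 /\
  [/\
      ~ (nu0 = 0 /\ forall t, t0 <= t <= tf ->
           [/\ lx t = 0, lv t = 0 & ly t = 0]),
      [/\ {within `[t0, tf], continuous lx}, {within `[t0, tf], continuous lv}
        & {within `[t0, tf], continuous ly}],
      (forall t, t0 < t < tf ->
        [/\ is_derive t 1 lx (- (ly t *: hessv E (x t) (v t))),
            is_derive t 1 lv (- lx t - ly t *: grad E (x t))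
          & is_derive t 1 ly 0]),
      [/\ lx tf = 0, lv t0 = 0 & ly tf = nu0]
    &
      (forall t, t0 <= t <= tf -> forall w : 'rV[R]_n,
        hamiltonian E (lx t) (lv t) (ly t) (x t) (v t) (y t) (u t)
        <= hamiltonian E (lx t) (lv t) (ly t) (x t) (v t) (y t) w)].

From HB Require Import structures.
From mathcomp Require Import all_boot all_order all_algebra.
From mathcomp Require Import all_classical all_reals all_analysis.
Import Order.TTheory GRing.Theory Num.Theory.
Import numFieldNormedType.Exports.
Local Open Scope ring_scope.

(* If nu0 = 0 the adjoint system forces the costates to vanish backwards from
   the transversality conditions: ly is constant with ly(tf) = nu0 = 0, so
   lx' = 0 and lx(tf) = 0, so lv' = 0 and lv(t0) = 0.  All multipliers then
   vanish, contradicting nontriviality. *)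

Section zero_derivative.
Local Open Scope classical_set_scope.
Context {R : realType}.

Lemma is_derive0_itv_cst {g : R -> R} {a b : R} :
  {within `[a, b], continuous g} ->
  (forall t, a < t < b -> is_derive t 1 g 0) ->
  forall t s, a <= t <= b -> a <= s <= b -> g t = g s.
Proof.
move=> gc g'0 t s.
wlog ts : t s / t <= s.
  move=> wlog_cst ht hs; have [ts|/ltW st] := leP t s; first exact: wlog_cst.
  by apply: esym; apply: wlog_cst.
move=> /andP[a_t _] /andP[_ sb].
have ts_ab : `[t, s] `<=` `[a, b] by apply: subset_itv; rewrite bnd_simp.
have g'0_ts r : r \in `]t, s[%R -> is_derive r 1 g 0.
  rewrite in_itv /= => /andP[tr rs]; apply: g'0.
  by rewrite (le_lt_trans a_t tr) (lt_le_trans rs sb).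
have [c _] := MVT_segment ts g'0_ts (continuous_subspaceW ts_ab gc).
by rewrite mul0r => /eqP; rewrite subr_eq0 => /eqP.
Qed.

Lemma is_derive_mx_entry (V : normedModType R) m n (M : V -> 'M[R]_(m, n))
    (x v : V) (dM : 'M[R]_(m, n)) :
  is_derive x v M dM -> forall i j, is_derive x v (fun t => M t i j) (dM i j).
Proof.
move=> [dMx <-] i j; have dMij := (derivable_mxP M x v).1 dMx i j.
by rewrite derive_mx // mxE; exact: derivableP.
Qed.

Lemma is_derive0_itv_cst_mx {m n} {f : R -> 'M[R]_(m, n)} {a b : R} :
  {within `[a, b], continuous f} ->
  (forall t, a < t < b -> is_derive t 1 f 0) ->
  forall t s, a <= t <= b -> a <= s <= b -> f t = f s.
Proof.
move=> fc f'0 t s ht hs; apply/matrixP => i j.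
apply: (@is_derive0_itv_cst (fun r => f r i j) a b _ _ t s ht hs) => [r|r].
  exact: continuous_comp (fc r) (@coord_continuous R m n i j (f r)).
by move=> /f'0 /is_derive_mx_entry /(_ i j); rewrite mxE.
Qed.

End zero_derivative.

Theorem lemma1 (R : realType) (n : nat) (E : 'rV[R]_n -> R)
  (hE : twice_differentiable E) (x0 : 'rV[R]_n) (t0 tf : R)
  (x v : R -> 'rV[R]_n) (y : R -> R) (u : R -> 'rV[R]_n)
  (lx lv : R -> 'rV[R]_n) (ly : R -> R) (nu0 : R) :
  extremal E x0 t0 tf x v y u lx lv ly nu0 -> 0 < nu0.
Proof.
move=> [[t0tf _ _ _] [nu0_ge0 [nontriv [lxc lvc lyc] adjoint [lx_tf lv_t0 ly_tf] _]]].
rewrite lt_def nu0_ge0 andbT; apply/eqP => nu0_0; apply: nontriv; split => //.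
have t0_in : t0 <= t0 <= tf by rewrite lexx ltW.
have tf_in : t0 <= tf <= tf by rewrite lexx ltW.
have inner t : t0 < t < tf -> t0 <= t <= tf by case/andP => ? ?; rewrite !ltW.
have ly0 t : t0 <= t <= tf -> ly t = 0.
  move=> ht; rewrite -nu0_0 -ly_tf.
  by apply: (is_derive0_itv_cst lyc _ _ _ ht tf_in) => s /adjoint[].
have lx0 t : t0 <= t <= tf -> lx t = 0.
  move=> ht; rewrite -lx_tf; apply: (is_derive0_itv_cst_mx lxc _ _ _ ht tf_in).
  by move=> s hs; case: (adjoint s hs); rewrite ly0 ?inner // scale0r oppr0.
have lv0 t : t0 <= t <= tf -> lv t = 0.
  move=> ht; rewrite -lv_t0; apply: (is_derive0_itv_cst_mx lvc _ _ _ ht t0_in).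
  move=> s hs; case: (adjoint s hs) => _.
  by rewrite lx0 ?inner // ly0 ?inner // scale0r subr0 oppr0.
by move=> t ht; split; [exact: lx0 | exact: lv0 | exact: ly0].
Qed.
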